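(* Let $F(z)=\bar{z}G(z)+H(z)$, $z\in\mathbb{D}$, where $G(z)=\sum_{n=1}^\infty a_nz^n\not\equiv 0$ and $H(z)=z+\sum_{n=2}^\infty b_nz^n$ are analytic in $\mathbb{D}$, and suppose that for some $r\in(0,1)$, $$\sum_{n=2}^\infty n|b_n|r^{n-1}+\sum_{n=1}^\infty(n+1)|a_n|r^n\leq 1.$$ Then $F$ is sense-preserving, univalent and fully starlike in $\mathbb{D}_r$.
   Context: $\mathbb{D}=\{z:|z|<1\}$, $\mathbb{D}_r=\{z:|z|<r\}$. For a continuously differentiable $F$, $F_z=\frac12(F_x-iF_y)$, $F_{\bar z}=\frac12(F_x+iF_y)$, and the Jacobian is $J_F=|F_z|^2-|F_{\bar z}|^2$; $F$ is sense-preserving on a domain if $J_F>0$ there. $F$ is fully starlike in $\mathbb{D}_r$ if it is sense-preserving there, $F(0)=0$, $F(z)\neq 0$ for $z\in\mathbb{D}_r\setminus\{0\}$, and for each $s\in(0,r)$ the curve $t\mapsto F(se^{it})$ is starlike with respect to the origin, i.e. $\mathrm{Re}\big((zF_z(z)-\bar zF_{\bar z}(z))/F(z)\big)>0$ for all $|z|=s$. *)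

From Stdlib Require Import Reals.
From Coquelicot Require Import Coquelicot.
Open Scope R_scope.

Definition pdx (f : C -> C) (z : C) : C :=
  (Derive (fun t => Re (f (Cplus z (RtoC t)))) 0,
   Derive (fun t => Im (f (Cplus z (RtoC t)))) 0).
Definition pdy (f : C -> C) (z : C) : C :=
  (Derive (fun t => Re (f (Cplus z (Cmult (RtoC t) Ci)))) 0,
   Derive (fun t => Im (f (Cplus z (Cmult (RtoC t) Ci)))) 0).

Definition Fz (f : C -> C) (z : C) : C :=
  Cmult (RtoC (/2)) (Cminus (pdx f z) (Cmult Ci (pdy f z))).
Definition Fzb (f : C -> C) (z : C) : C :=
  Cmult (RtoC (/2)) (Cplus (pdx f z) (Cmult Ci (pdy f z))).

Definition Jac (f : C -> C) (z : C) : R := (Cmod (Fz f z))^2 - (Cmod (Fzb f z))^2.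

Definition sense_preserving_in (f : C -> C) (r : R) : Prop :=
  forall z : C, Cmod z < r -> 0 < Jac f z.

Definition univalent_in (f : C -> C) (r : R) : Prop :=
  forall z w : C, Cmod z < r -> Cmod w < r -> f z = f w -> z = w.

Definition fully_starlike_in (f : C -> C) (r : R) : Prop :=
  sense_preserving_in f r /\ f (RtoC 0) = RtoC 0 /\
  (forall z : C, 0 < Cmod z < r -> f z <> RtoC 0) /\
  (forall s : R, 0 < s < r -> forall z : C, Cmod z = s ->
     0 < Re (Cdiv (Cminus (Cmult z (Fz f z)) (Cmult (Cconj z) (Fzb f z))) (f z))).

(** Write H(z) = z + H₀(z), so that H₀ has the Taylor coefficients b_n (n ≥ 2) of H and no
    linear term, and let T(ρ) = Σ n|b_n|ρ^(n-1) + Σ (n+1)|a_n|ρ^n be the left-hand side of the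
    hypothesis evaluated at ρ. Then T(r) ≤ 1, and T is strictly increasing because some
    a_m ≠ 0, so T(ρ) < 1 for ρ < r. Every quantity in the claim is a power series dominated
    termwise by T: on |z| = ρ one has |F_z - 1| + |F_z̄| ≤ T(ρ), where F_z̄ = G (sense
    preservation); |F(z) - F(w) - (z - w)| ≤ T(ρ)|z - w| for |z|, |w| ≤ ρ (univalence); and
    |zF_z - z̄F_z̄ - F(z)| + |F(z) - z| ≤ ρT(ρ) < |z|, so that |zF_z - z̄F_z̄ - F| < |F| and the
    quotient has positive real part (starlikeness). The Wirtinger derivatives themselves are
    read off the expansion F(z + h) = F(z) + hF_z + h̄F_z̄ + O(|h|²), which follows from
    termwise second-order bounds on (z + h)^n. *)

From Stdlib Require Import Reals Lra Lia Psatz.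
From Coquelicot Require Import Coquelicot.
Open Scope R_scope.

Notation is_Cseries := (@is_series C_AbsRing C_NormedModule).
Notation ex_Cseries := (@ex_series C_AbsRing C_NormedModule).

Lemma is_Cseries_plus (u v : nat -> C) (l m : C) :
  is_Cseries u l -> is_Cseries v m -> is_Cseries (fun n => (u n + v n)%C) (l + m)%C.
Proof. exact (is_series_plus u v l m). Qed.

Lemma is_Cseries_minus (u v : nat -> C) (l m : C) :
  is_Cseries u l -> is_Cseries v m -> is_Cseries (fun n => (u n - v n)%C) (l - m)%C.
Proof. exact (is_series_minus u v l m). Qed.

Lemma is_Cseries_scal (c : C) (u : nat -> C) (l : C) :
  is_Cseries u l -> is_Cseries (fun n => (c * u n)%C) (c * l)%C.
Proof. exact (is_series_scal_l c u l). Qed.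

Lemma is_series_finite_support {K : AbsRing} {V : NormedModule K} (u : nat -> V) (N : nat) :
  (forall n, (N < n)%nat -> u n = zero) -> is_series u (sum_n u N).
Proof.
  intros Hu. apply filterlim_ext_loc with (fun _ => sum_n u N); [|apply filterlim_const].
  exists N. intros n Hn. induction Hn as [|n Hn IH]; [reflexivity|].
  rewrite sum_Sn, Hu, plus_zero_r by lia. exact IH.
Qed.

Lemma pseries_value_at_0 (c : nat -> C) (l : C) :
  is_Cseries (fun n => (0 ^ n * c n)%C) l -> l = c 0%nat.
Proof. intros Hl. exact (filterlim_locally_unique _ _ _ Hl (is_pseries_0 c)). Qed.

Lemma Cmod_sum_n_le (u : nat -> C) (v : nat -> R) (N : nat) :
  (forall n, Cmod (u n) <= v n) -> Cmod (sum_n u N) <= sum_n v N.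
Proof.
  intros Huv; induction N as [|N IH]; rewrite ?sum_O, ?sum_Sn; [apply Huv|].
  apply (Rle_trans _ _ _ (Cmod_triangle _ _)).
  apply Rplus_le_compat; [exact IH | apply Huv].
Qed.

Lemma Cmod_sum_n_le2 (u1 u2 : nat -> C) (v : nat -> R) (N : nat) :
  (forall n, Cmod (u1 n) + Cmod (u2 n) <= v n) ->
  Cmod (sum_n u1 N) + Cmod (sum_n u2 N) <= sum_n v N.
Proof.
  intros Huv; induction N as [|N IH]; rewrite ?sum_O, ?sum_Sn; [apply Huv|].
  pose proof (Cmod_triangle (sum_n u1 N) (u1 (S N))).
  pose proof (Cmod_triangle (sum_n u2 N) (u2 (S N))).
  specialize (Huv (S N)).
  change (Cmod (sum_n u1 N + u1 (S N))%C + Cmod (sum_n u2 N + u2 (S N))%C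
    <= sum_n v N + v (S N)).
  lra.
Qed.

Lemma is_lim_seq_Cmod_sum_n (u : nat -> C) (l : C) :
  is_Cseries u l -> is_lim_seq (fun N => Cmod (sum_n u N)) (Cmod l).
Proof.
  intros Hu. eapply filterlim_comp; [exact Hu | exact (filterlim_norm (V:=C_NormedModule) l)].
Qed.

Lemma Cmod_series_le (u : nat -> C) (v : nat -> R) (l : C) (s : R) :
  is_Cseries u l -> is_series v s -> (forall n, Cmod (u n) <= v n) -> Cmod l <= s.
Proof.
  intros Hu Hv Huv.
  apply (is_lim_seq_le _ (sum_n v) (Cmod l) s (fun N => Cmod_sum_n_le u v N Huv)); [|exact Hv].
  now apply is_lim_seq_Cmod_sum_n.
Qed.

Lemma Cmod_series_le2 (u1 u2 : nat -> C) (v : nat -> R) (l1 l2 : C) (s : R) :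
  is_Cseries u1 l1 -> is_Cseries u2 l2 -> is_series v s ->
  (forall n, Cmod (u1 n) + Cmod (u2 n) <= v n) -> Cmod l1 + Cmod l2 <= s.
Proof.
  intros H1 H2 Hv Huv.
  apply (is_lim_seq_le _ (sum_n v) (Cmod l1 + Cmod l2) s
    (fun N => Cmod_sum_n_le2 u1 u2 v N Huv)); [|exact Hv].
  now apply is_lim_seq_plus'; apply is_lim_seq_Cmod_sum_n.
Qed.

Lemma sum_f_R0_le_Series (u : nat -> R) (N : nat) :
  (forall n, 0 <= u n) -> ex_series u -> sum_f_R0 u N <= Series u.
Proof.
  intros Hu Hex. apply sum_incr; [|exact Hu].
  exact (proj1 (is_series_Reals _ _) (Series_correct _ Hex)).
Qed.

Lemma Series_lt (u v : nat -> R) (m : nat) :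
  ex_series u -> ex_series v -> (forall n, u n <= v n) -> u m < v m -> Series u < Series v.
Proof.
  intros Hu Hv Huv Hm.
  assert (Hw0 : forall n, 0 <= v n - u n) by (intro n; specialize (Huv n); lra).
  assert (Hw : ex_series (fun n => v n - u n)) by (now apply (ex_series_minus (V:=R_NormedModule))).
  assert (Hterm : v m - u m <= sum_f_R0 (fun n => v n - u n) m).
  { destruct m; simpl; [lra|]. pose proof (cond_pos_sum _ m Hw0). lra. }
  pose proof (sum_f_R0_le_Series _ m Hw0 Hw).
  rewrite Series_minus in * by assumption. lra.
Qed.

Lemma ex_series_sq_geom (q : R) : 0 < q < 1 -> ex_series (fun n => (INR n + 1) ^ 2 * q ^ n).
Proof.
  intros Hq.
  assert (Hpos : forall n, 0 < (INR n + 1) ^ 2 * q ^ n).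
  { intro n. pose proof (pos_INR n). apply Rmult_lt_0_compat; [nra | apply pow_lt; lra]. }
  apply ex_series_ext with (fun n => Rabs ((INR n + 1) ^ 2 * q ^ n)).
  { intro n. apply Rabs_pos_eq, Rlt_le, Hpos. }
  apply ex_series_DAlembert with q; [lra | intro n; apply Rgt_not_eq, Hpos |].
  assert (Hinv : is_lim_seq (fun n => / (INR n + 1)) 0).
  { apply is_lim_seq_ext with (fun n => / INR (S n)); [intro n; now rewrite S_INR |].
    replace (Finite 0) with (Rbar_inv p_infty) by reflexivity.
    apply is_lim_seq_inv; [apply (is_lim_seq_incr_1 INR), is_lim_seq_INR | discriminate]. }
  apply is_lim_seq_ext with (fun n => (1 + / (INR n + 1)) * (1 + / (INR n + 1)) * q).
  { intro n. pose proof (pos_INR n). rewrite Rabs_pos_eq.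
    - rewrite S_INR; simpl; field; split; [apply pow_nonzero|]; lra.
    - apply Rlt_le, Rdiv_lt_0_compat; apply Hpos. }
  replace (Finite q) with (Finite ((1 + 0) * (1 + 0) * q)) by (f_equal; ring).
  assert (H1 : is_lim_seq (fun n => 1 + / (INR n + 1)) (1 + 0))
    by (apply is_lim_seq_plus'; [apply is_lim_seq_const | exact Hinv]).
  apply is_lim_seq_mult'; [apply is_lim_seq_mult'; exact H1 | apply is_lim_seq_const].
Qed.

Lemma Cmod_INR (n : nat) : Cmod (INR n) = INR n.
Proof. rewrite Cmod_R. apply Rabs_pos_eq, pos_INR. Qed.

Lemma Cmod_rev_triangle (u v : C) : Cmod u - Cmod v <= Cmod (u + v)%C.
Proof.
  pose proof (Cmod_triangle (u + v) (- v)) as Htri. rewrite Cmod_opp in Htri.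
  replace (u + v + - v)%C with u in Htri by ring. lra.
Qed.

Lemma im_le_Cmod (c : C) : Rabs (Im c) <= Cmod c.
Proof.
  rewrite <- (Rabs_pos_eq (Cmod c)) by apply Cmod_ge_0.
  apply Rsqr_le_abs_0. rewrite !Rsqr_pow2, Cmod2_alt.
  pose proof (pow2_ge_0 (Re c)). lra.
Qed.

Lemma Re_Cdiv_pos (A B : C) : Cmod (A - B)%C < Cmod B -> 0 < Re (A / B)%C.
Proof.
  intros H. pose proof (Cmod_ge_0 (A - B)%C).
  assert (H2 : Cmod (A - B)%C ^ 2 < Cmod B ^ 2) by nra.
  assert (Hb : 0 < Cmod B ^ 2) by nra.
  rewrite (Cmod2_alt (A - B)), (Cmod2_alt B) in H2. rewrite Cmod2_alt in Hb.
  destruct A as [a1 a2], B as [b1 b2]. simpl in H2, Hb.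
  replace (Re (Cdiv (a1, a2) (b1, b2))) with ((a1 * b1 + a2 * b2) / (b1 ^ 2 + b2 ^ 2))
    by (unfold Cdiv, Cinv, Cmult; simpl; field; nra).
  apply Rdiv_lt_0_compat; nra.
Qed.

Lemma pow_pred_le (x : R) (n : nat) : 0 <= x <= 1 -> x * x ^ pred n <= x ^ n.
Proof. intros Hx. destruct n; simpl; lra. Qed.

Lemma Cmod_Cpow_sub_le (z w : C) (rho : R) (n : nat) : Cmod z <= rho -> Cmod w <= rho ->
  Cmod (z ^ n - w ^ n)%C <= INR n * rho ^ pred n * Cmod (z - w)%C.
Proof.
  intros Hz Hw. pose proof (Cmod_ge_0 z). pose proof (Cmod_ge_0 w). pose proof (Cmod_ge_0 (z - w)%C).
  induction n as [|n IH].
  - replace (z ^ 0 - w ^ 0)%C with (RtoC 0) by (simpl; ring). rewrite Cmod_0. simpl; lra.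
  - replace (z ^ S n - w ^ S n)%C with (z * (z ^ n - w ^ n) + (z - w) * w ^ n)%C by (simpl; ring).
    eapply Rle_trans; [apply Cmod_triangle|]. rewrite !Cmod_mult, Cmod_pow.
    assert (Hn : INR n * (rho * rho ^ pred n) = INR n * rho ^ n) by (destruct n; simpl; ring).
    assert (Hwn : Cmod w ^ n <= rho ^ n) by (apply pow_incr; lra).
    pose proof (Cmod_ge_0 (z ^ n - w ^ n)%C).
    assert (T1 : Cmod z * Cmod (z ^ n - w ^ n)%C <= rho * (INR n * rho ^ pred n * Cmod (z - w)%C))
      by (apply Rmult_le_compat; lra).
    assert (T2 : Cmod (z - w)%C * Cmod w ^ n <= Cmod (z - w)%C * rho ^ n)
      by (apply Rmult_le_compat_l; lra).
    rewrite S_INR. simpl pred. nra.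
Qed.

Lemma Cpow_sub_first_order_le (z h : C) (rho : R) (n : nat) : Cmod z + Cmod h <= rho ->
  Cmod ((z + h) ^ n - z ^ n - INR n * h * z ^ pred n)%C * rho ^ 2
    <= INR n ^ 2 * Cmod h ^ 2 * rho ^ n.
Proof.
  intros Hr. pose proof (Cmod_ge_0 z). pose proof (Cmod_ge_0 h).
  assert (Hzh : Cmod (z + h)%C <= rho) by (eapply Rle_trans; [apply Cmod_triangle | exact Hr]).
  induction n as [|[|m] IH].
  - replace ((z + h) ^ 0 - z ^ 0 - INR 0 * h * z ^ pred 0)%C with (RtoC 0) by (simpl; ring).
    rewrite Cmod_0. simpl; lra.
  - replace ((z + h) ^ 1 - z ^ 1 - INR 1 * h * z ^ pred 1)%C with (RtoC 0) by (simpl; ring).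
    rewrite Cmod_0. simpl; nra.
  - set (n := S m) in *.
    (* the remainder e_n satisfies e_(n+1) = (z + h) e_n + n h^2 z^(n-1) *)
    replace ((z + h) ^ S n - z ^ S n - INR (S n) * h * z ^ pred (S n))%C
      with ((z + h) * ((z + h) ^ n - z ^ n - INR n * h * z ^ pred n) + INR n * (h * h) * z ^ m)%C
      by (unfold n; rewrite (S_INR (S m)), RtoC_plus; cbn [Cpow Nat.pred]; ring).
    set (e := ((z + h) ^ n - z ^ n - INR n * h * z ^ pred n)%C) in *.
    pose proof (Cmod_triangle ((z + h) * e) (INR n * (h * h) * z ^ m)) as Htri.
    rewrite !Cmod_mult, Cmod_INR, Cmod_pow in Htri.
    assert (Hzm : Cmod z ^ m <= rho ^ m) by (apply pow_incr; lra).
    pose proof (Cmod_ge_0 e). pose proof (pos_INR n). pose proof (pow_le rho m ltac:(lra)).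
    assert (Hn : rho ^ n = rho * rho ^ m) by reflexivity.
    rewrite S_INR. change (rho ^ S n) with (rho * rho ^ n). rewrite Hn in IH |- *.
    assert (T1 : Cmod (z + h)%C * Cmod e * rho ^ 2
                 <= rho * (INR n ^ 2 * Cmod h ^ 2 * (rho * rho ^ m))).
    { apply (Rle_trans _ (rho * (Cmod e * rho ^ 2))); [|apply Rmult_le_compat_l; lra].
      rewrite <- Rmult_assoc. apply Rmult_le_compat_r; [apply pow2_ge_0 | nra]. }
    assert (T2 : INR n * (Cmod h * Cmod h) * Cmod z ^ m * rho ^ 2
                 <= INR n * Cmod h ^ 2 * (rho * (rho * rho ^ m))).
    { replace (INR n * Cmod h ^ 2 * (rho * (rho * rho ^ m)))
        with (INR n * (Cmod h * Cmod h) * rho ^ m * rho ^ 2) by ring.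
      apply Rmult_le_compat_r; [apply pow2_ge_0|]. apply Rmult_le_compat_l; [|lra].
      apply Rmult_le_pos; [lra | nra]. }
    assert (T3 : 0 <= Cmod h ^ 2 * (rho * (rho * rho ^ m)))
      by (apply Rmult_le_pos; [apply pow2_ge_0 | nra]).
    nra.
Qed.

(** * Power series in the unit disk *)

Lemma Cmod_coef_pow_lt_1_eventually (c : nat -> C) (x : R) :
  0 <= x -> ex_Cseries (fun n => (RtoC x ^ n * c n)%C) ->
  exists N, forall n, (N <= n)%nat -> Cmod (c n) * x ^ n < 1.
Proof.
  intros Hx Hc.
  destruct (Cauchy_ex_series _ Hc (mkposreal 1 Rlt_0_1)) as [N HN].
  exists N; intros n Hn. specialize (HN n n Hn Hn). rewrite sum_n_n in HN.
  change (Cmod (RtoC x ^ n * c n)%C < 1) in HN.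
  now rewrite Cmod_mult, Cmod_pow, Cmod_R, Rabs_pos_eq, Rmult_comm in HN.
Qed.

Lemma ex_series_sq_weighted_coef (c : nat -> C) (x rho : R) :
  0 <= rho < x -> ex_Cseries (fun n => (RtoC x ^ n * c n)%C) ->
  ex_series (fun n => (INR n + 1) ^ 2 * Cmod (c n) * rho ^ n).
Proof.
  intros Hrho Hc.
  destruct (Cmod_coef_pow_lt_1_eventually c x ltac:(lra) Hc) as [N HN].
  set (q := (rho + x) / 2 / x).
  assert (Hq : 0 < q < 1).
  { unfold q; split; [apply Rdiv_lt_0_compat; lra |].
    apply (Rmult_lt_reg_r x); [lra |]. unfold Rdiv; rewrite Rmult_assoc, Rinv_l; lra. }
  apply (ex_series_incr_n _ N).
  apply (ex_series_le (V:=R_CompleteNormedModule))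
    with (fun k => (INR (N + k) + 1) ^ 2 * q ^ (N + k)).
  - intro k. set (n := (N + k)%nat).
    change (Rabs ((INR n + 1) ^ 2 * Cmod (c n) * rho ^ n) <= (INR n + 1) ^ 2 * q ^ n).
    specialize (HN n ltac:(unfold n; lia)).
    assert (Hrq : rho ^ n <= q ^ n * x ^ n).
    { rewrite <- Rpow_mult_distr. apply pow_incr. unfold q. split; [lra|].
      unfold Rdiv; rewrite Rmult_assoc, Rinv_l; lra. }
    pose proof (Cmod_ge_0 (c n)). pose proof (pow_le rho n ltac:(lra)).
    pose proof (pow_le q n ltac:(lra)). pose proof (pow2_ge_0 (INR n + 1)).
    rewrite Rabs_pos_eq by (apply Rmult_le_pos; [apply Rmult_le_pos|]; lra).
    rewrite Rmult_assoc. apply Rmult_le_compat_l; [lra|]. nra.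
  - now apply (ex_series_incr_n (fun n => (INR n + 1) ^ 2 * q ^ n)), ex_series_sq_geom.
Qed.

Definition pseries_deriv_term (c : nat -> C) (z : C) (n : nat) : C :=
  (INR n * c n * z ^ pred n)%C.

Lemma Cmod_pseries_deriv_term (c : nat -> C) (z : C) (n : nat) :
  Cmod (pseries_deriv_term c z n) = INR n * Cmod (c n) * Cmod z ^ pred n.
Proof. unfold pseries_deriv_term. now rewrite !Cmod_mult, Cmod_INR, Cmod_pow. Qed.

Lemma Cmod_pseries_deriv_term_le (c : nat -> C) (z : C) (rho : R) (n : nat) :
  Cmod z <= rho -> rho * Cmod (pseries_deriv_term c z n) <= INR n * Cmod (c n) * rho ^ n.
Proof.
  intros Hz. rewrite Cmod_pseries_deriv_term.
  pose proof (Cmod_ge_0 z). pose proof (Cmod_ge_0 (c n)).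
  destruct n as [|m]; simpl pred; [simpl; lra|].
  assert (Hm : Cmod z ^ m <= rho ^ m) by (apply pow_incr; lra).
  assert (Hc : 0 <= rho * (INR (S m) * Cmod (c (S m))))
    by (pose proof (pos_INR (S m)); apply Rmult_le_pos; [lra | nra]).
  pose proof (Rmult_le_compat_l _ _ _ Hc Hm).
  change (rho ^ S m) with (rho * rho ^ m). lra.
Qed.

Lemma Cmod_pseries_remainder_term_le (c : nat -> C) (z h : C) (rho : R) (n : nat) :
  0 < rho -> Cmod z + Cmod h <= rho ->
  Cmod ((z + h) ^ n * c n - z ^ n * c n - h * pseries_deriv_term c z n)%C
    <= Cmod h ^ 2 / rho ^ 2 * ((INR n + 1) ^ 2 * Cmod (c n) * rho ^ n).
Proof.
  intros Hrho Hr.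
  replace ((z + h) ^ n * c n - z ^ n * c n - h * pseries_deriv_term c z n)%C
    with (c n * ((z + h) ^ n - z ^ n - INR n * h * z ^ pred n))%C
    by (unfold pseries_deriv_term; ring).
  rewrite Cmod_mult.
  apply (Rmult_le_reg_r (rho ^ 2)); [apply pow_lt; lra|].
  replace (Cmod h ^ 2 / rho ^ 2 * ((INR n + 1) ^ 2 * Cmod (c n) * rho ^ n) * rho ^ 2)
    with (Cmod (c n) * ((INR n + 1) ^ 2 * Cmod h ^ 2 * rho ^ n)) by (field; lra).
  rewrite Rmult_assoc. apply Rmult_le_compat_l; [apply Cmod_ge_0|].
  eapply Rle_trans; [apply Cpow_sub_first_order_le, Hr|].
  pose proof (pos_INR n). pose proof (pow_le rho n ltac:(lra)).
  apply Rmult_le_compat_r; [lra|]. apply Rmult_le_compat_r; [apply pow2_ge_0 | nra].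
Qed.

Definition drop_coef1 (b : nat -> C) (n : nat) : C := if Nat.eqb n 1 then 0 else b n.

Lemma is_Cseries_drop_coef1 (b : nat -> C) (z l : C) : b 1%nat = 1 ->
  is_Cseries (fun n => (z ^ n * b n)%C) l -> is_Cseries (fun n => (z ^ n * drop_coef1 b n)%C) (l - z)%C.
Proof.
  intros Hb1 Hl.
  assert (Hz := is_series_finite_support (V:=C_NormedModule)
    (fun n => (z ^ n * (if Nat.eqb n 1 then 1 else 0))%C) 1
    ltac:(intros [|[|n]] Hn; [lia | lia | simpl; change zero with (RtoC 0); ring])).
  replace (sum_n _ 1) with z in Hz
    by (rewrite sum_Sn, sum_O; change (z = z ^ 0 * 0 + z ^ 1 * 1)%C; simpl; ring).
  eapply is_series_ext; [|exact (is_Cseries_minus _ _ _ _ Hl Hz)].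
  intros [|[|n]]; unfold drop_coef1; simpl; [ring | rewrite Hb1; ring | ring].
Qed.

Section PowerSeries.

Variables (c : nat -> C) (g : C -> C).
Hypothesis Hg : forall z, Cmod z < 1 -> is_Cseries (fun n => (z ^ n * c n)%C) (g z).

Lemma ex_series_sq_weighted_unit_disk (rho : R) : 0 <= rho < 1 ->
  ex_series (fun n => (INR n + 1) ^ 2 * Cmod (c n) * rho ^ n).
Proof.
  intros Hrho. apply (ex_series_sq_weighted_coef c ((rho + 1) / 2)); [lra|].
  exists (g (RtoC ((rho + 1) / 2))). apply Hg. rewrite Cmod_R, Rabs_pos_eq; lra.
Qed.

Lemma ex_Cseries_pseries_deriv (z : C) : Cmod z < 1 -> ex_Cseries (pseries_deriv_term c z).
Proof.
  intros Hz. pose proof (Cmod_ge_0 z).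
  set (rho := (Cmod z + 1) / 2).
  assert (Hrho : Cmod z < rho < 1) by (unfold rho; lra).
  apply (ex_series_le (V:=C_CompleteNormedModule))
    with (fun n => / rho * ((INR n + 1) ^ 2 * Cmod (c n) * rho ^ n)).
  - intro n. change (Cmod (pseries_deriv_term c z n) <= / rho * ((INR n + 1) ^ 2 * Cmod (c n) * rho ^ n)).
    apply (Rmult_le_reg_l rho); [lra|]. rewrite <- Rmult_assoc, Rinv_r, Rmult_1_l by lra.
    apply (Rle_trans _ _ _ (Cmod_pseries_deriv_term_le c z rho n ltac:(lra))).
    pose proof (Cmod_ge_0 (c n)). pose proof (pow_le rho n ltac:(lra)).
    apply Rmult_le_compat_r; [lra|]. apply Rmult_le_compat_r; [lra | nra].
  - apply (ex_series_scal_l (V:=R_NormedModule)), ex_series_sq_weighted_unit_disk; lra.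
Qed.

Lemma pseries_first_order (z : C) : Cmod z < 1 ->
  exists d, is_Cseries (pseries_deriv_term c z) d /\
    exists K delta, 0 <= K /\ 0 < delta /\ forall h, Cmod h < delta ->
      Cmod (g (z + h) - g z - h * d)%C <= K * Cmod h ^ 2.
Proof.
  intros Hz. pose proof (Cmod_ge_0 z).
  destruct (ex_Cseries_pseries_deriv z Hz) as [d Hd].
  set (rho := (Cmod z + 1) / 2).
  assert (Hrho : Cmod z < rho < 1) by (unfold rho; lra).
  set (w := fun n => (INR n + 1) ^ 2 * Cmod (c n) * rho ^ n).
  assert (Hw : ex_series w) by (apply ex_series_sq_weighted_unit_disk; lra).
  assert (Hw0 : forall n, 0 <= w n).
  { intro n. unfold w. pose proof (Cmod_ge_0 (c n)). pose proof (pow2_ge_0 (INR n + 1)).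
    pose proof (pow_le rho n ltac:(lra)). apply Rmult_le_pos; [apply Rmult_le_pos|]; lra. }
  exists d; split; [exact Hd|].
  exists (Series w / rho ^ 2), (rho - Cmod z). split; [|split; [lra|]].
  { apply Rdiv_le_0_compat; [|apply pow_lt; lra].
    pose proof (sum_f_R0_le_Series w 0 Hw0 Hw). pose proof (Hw0 0%nat). simpl in *; lra. }
  intros h Hh.
  assert (Hzh : Cmod (z + h)%C < 1) by (eapply Rle_lt_trans; [apply Cmod_triangle | lra]).
  replace (Series w / rho ^ 2 * Cmod h ^ 2) with (Cmod h ^ 2 / rho ^ 2 * Series w) by (field; lra).
  rewrite <- Series_scal_l.
  apply (Cmod_series_le _ _ _ _
    (is_Cseries_minus _ _ _ _ (is_Cseries_minus _ _ _ _ (Hg _ Hzh) (Hg _ Hz)) (is_Cseries_scal h _ _ Hd))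
    (Series_correct _ (ex_series_scal_l _ _ Hw))).
  intro n. apply Cmod_pseries_remainder_term_le; lra.
Qed.

End PowerSeries.

(** * Wirtinger derivatives *)

Lemma Derive_of_quadratic_remainder (phi : R -> R) (L K delta : R) : 0 < delta ->
  (forall t, Rabs t < delta -> Rabs (phi t - phi 0 - t * L) <= K * t ^ 2) ->
  Derive phi 0 = L.
Proof.
  intros Hdelta Hphi. apply is_derive_unique, is_derive_Reals.
  intros eps Heps.
  set (eta := Rmin delta (eps / (Rabs K + 1))).
  assert (HK : 0 < Rabs K + 1) by (pose proof (Rabs_pos K); lra).
  assert (Heta : 0 < eta) by (apply Rmin_pos; [lra | apply Rdiv_lt_0_compat; lra]).
  exists (mkposreal eta Heta). intros t Ht0 Ht. simpl in Ht.
  assert (Htd : Rabs t < delta) by (eapply Rlt_le_trans; [exact Ht | apply Rmin_l]).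
  assert (Hte : Rabs t * (Rabs K + 1) < eps).
  { apply (Rmult_lt_reg_r (/ (Rabs K + 1))); [apply Rinv_0_lt_compat; lra|].
    rewrite Rmult_assoc, Rinv_r, Rmult_1_r by lra.
    eapply Rlt_le_trans; [exact Ht | apply Rmin_r]. }
  specialize (Hphi t Htd).
  rewrite Rplus_0_l.
  replace ((phi t - phi 0) / t - L) with ((phi t - phi 0 - t * L) / t) by (field; exact Ht0).
  assert (Hpos : 0 < Rabs t) by (apply Rabs_pos_lt, Ht0).
  unfold Rdiv. rewrite Rabs_mult, Rabs_inv.
  apply (Rmult_lt_reg_r (Rabs t)); [exact Hpos|]. rewrite Rmult_assoc, Rinv_l, Rmult_1_r by lra.
  rewrite <- (pow2_abs t) in Hphi. pose proof (Rle_abs K).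
  nra.
Qed.

(* The parametrisation gamma of the line t |-> t d lets the lemma match both [RtoC t] in
   [pdx] and [t * Ci] in [pdy]. *)
Lemma Derive_along_line (f : C -> C) (z P Q d : C) (K delta : R) (gamma : R -> C) :
  0 < delta ->
  (forall h, Cmod h < delta ->
     Cmod (f (z + h) - f z - (h * P + Cconj h * Q))%C <= K * Cmod h ^ 2) ->
  (forall t, gamma t = (t * d)%C) -> Cmod d = 1 ->
  Derive (fun t => Re (f (z + gamma t)%C)) 0 = Re (d * P + Cconj d * Q)%C /\
  Derive (fun t => Im (f (z + gamma t)%C)) 0 = Im (d * P + Cconj d * Q)%C.
Proof.
  intros Hdelta Hf Hgamma Hd.
  assert (Hz : (z + gamma 0)%C = z) by (rewrite Hgamma; ring).
  assert (Hline : forall t, Rabs t < delta ->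
    Cmod (f (z + gamma t) - f z - t * (d * P + Cconj d * Q))%C <= K * t ^ 2).
  { intros t Ht. rewrite Hgamma.
    replace (t * (d * P + Cconj d * Q))%C with (t * d * P + Cconj (t * d) * Q)%C
      by (rewrite Cmult_conj; apply injective_projections; simpl; ring).
    replace (t ^ 2) with (Cmod (t * d)%C ^ 2)
      by (rewrite Cmod_mult, Cmod_R, Hd, Rmult_1_r; apply pow2_abs).
    apply Hf. rewrite Cmod_mult, Cmod_R, Hd; lra. }
  split; apply (Derive_of_quadratic_remainder _ _ K delta Hdelta); intros t Ht;
    rewrite Hz; refine (Rle_trans _ _ _ _ (Hline t Ht));
    [eapply Rle_trans; [|apply re_le_Cmod] | eapply Rle_trans; [|apply im_le_Cmod]];
    right; f_equal; unfold Re, Im, Cminus, Copp, Cplus, Cmult; simpl; ring.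
Qed.

(* Along the real axis f_x = P + Q, along the imaginary axis f_y = i (P - Q). *)
Lemma Wirtinger_of_first_order (f : C -> C) (z P Q : C) (K delta : R) : 0 < delta ->
  (forall h, Cmod h < delta ->
     Cmod (f (z + h) - f z - (h * P + Cconj h * Q))%C <= K * Cmod h ^ 2) ->
  Fz f z = P /\ Fzb f z = Q.
Proof.
  intros Hdelta Hf.
  destruct (Derive_along_line f z P Q 1 K delta RtoC Hdelta Hf) as [Hx1 Hx2];
    [intro t; ring | apply Cmod_1 |].
  destruct (Derive_along_line f z P Q Ci K delta (fun t => (t * Ci)%C) Hdelta Hf) as [Hy1 Hy2];
    [reflexivity | rewrite <- sqrt_1; unfold Cmod; f_equal; simpl; ring |].
  unfold Fz, Fzb, pdx, pdy. rewrite Hx1, Hx2, Hy1, Hy2.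
  split; apply injective_projections; simpl; field.
Qed.

(** * The coefficient majorant *)

(* The n-th term of T(ρ), b being the coefficients of H₀. *)
Definition majorant (a b : nat -> C) (rho : R) (n : nat) : R :=
  INR n * Cmod (b n) * rho ^ pred n + (INR n + 1) * Cmod (a n) * rho ^ n.

Lemma majorant_nonneg (a b : nat -> C) (rho : R) (n : nat) :
  0 <= rho -> 0 <= majorant a b rho n.
Proof.
  intros Hrho. unfold majorant. pose proof (pos_INR n). pose proof (Cmod_ge_0 (a n)).
  pose proof (Cmod_ge_0 (b n)). pose proof (pow_le rho n Hrho). pose proof (pow_le rho (pred n) Hrho).
  apply Rplus_le_le_0_compat; repeat apply Rmult_le_pos; lra.
Qed.

Lemma majorant_le (a b : nat -> C) (rho rho' : R) (n : nat) : 0 <= rho <= rho' ->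
  majorant a b rho n <= majorant a b rho' n.
Proof.
  intros Hrho. unfold majorant.
  pose proof (pos_INR n). pose proof (Cmod_ge_0 (a n)). pose proof (Cmod_ge_0 (b n)).
  assert (rho ^ pred n <= rho' ^ pred n) by (apply pow_incr; lra).
  assert (rho ^ n <= rho' ^ n) by (apply pow_incr; lra).
  apply Rplus_le_compat; apply Rmult_le_compat_l; nra.
Qed.

Lemma majorant_lt (a b : nat -> C) (rho rho' : R) (m : nat) : 0 <= rho < rho' ->
  m <> 0%nat -> a m <> 0 -> majorant a b rho m < majorant a b rho' m.
Proof.
  intros Hrho Hm Ham. unfold majorant.
  assert (Hb : INR m * Cmod (b m) * rho ^ pred m <= INR m * Cmod (b m) * rho' ^ pred m).
  { pose proof (pos_INR m). pose proof (Cmod_ge_0 (b m)).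
    apply Rmult_le_compat_l; [nra | apply pow_incr; lra]. }
  assert (Ha : (INR m + 1) * Cmod (a m) * rho ^ m < (INR m + 1) * Cmod (a m) * rho' ^ m).
  { pose proof (pos_INR m). pose proof (proj1 (Cmod_gt_0 (a m)) Ham).
    apply Rmult_lt_compat_l; [nra|]. destruct m as [|k]; [easy|].
    assert (rho ^ k <= rho' ^ k) by (apply pow_incr; lra).
    pose proof (pow_lt rho' k ltac:(lra)). simpl; nra. }
  lra.
Qed.

Lemma Series_majorant_shift (a b : nat -> C) (r : R) :
  a 0%nat = 0 -> b 1%nat = 0 -> 0 <= r -> ex_series (majorant a b r) ->
  Series (majorant a b r)
    = Series (fun n => INR (n + 2) * Cmod (b (n + 2)%nat) * r ^ (n + 1))
      + Series (fun n => INR (n + 2) * Cmod (a (n + 1)%nat) * r ^ (n + 1)).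
Proof.
  intros Ha0 Hb1 Hr Hex.
  set (tb := fun n => INR n * Cmod (b n) * r ^ pred n).
  set (ta := fun n => (INR n + 1) * Cmod (a n) * r ^ n).
  assert (Hterms : forall n, 0 <= tb n /\ 0 <= ta n).
  { intro n. unfold tb, ta. pose proof (pos_INR n). pose proof (Cmod_ge_0 (a n)).
    pose proof (Cmod_ge_0 (b n)). pose proof (pow_le r n Hr). pose proof (pow_le r (pred n) Hr).
    split; repeat apply Rmult_le_pos; lra. }
  assert (Htb : ex_series tb).
  { apply (ex_series_le (V:=R_CompleteNormedModule)) with (majorant a b r); [|exact Hex].
    intro n. change (Rabs (tb n) <= tb n + ta n). specialize (Hterms n). rewrite Rabs_pos_eq; lra. }
  assert (Hta : ex_series ta).
  { apply (ex_series_le (V:=R_CompleteNormedModule)) with (majorant a b r); [|exact Hex].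
    intro n. change (Rabs (ta n) <= tb n + ta n). specialize (Hterms n). rewrite Rabs_pos_eq; lra. }
  rewrite (Series_ext (majorant a b r) (fun n => tb n + ta n)) by reflexivity.
  rewrite Series_plus by assumption.
  rewrite (Series_incr_n_aux tb 2), (Series_incr_1_aux ta).
  - f_equal; apply Series_ext; intro n; unfold tb, ta.
    + replace (2 + n)%nat with (n + 2)%nat by lia.
      now replace (pred (n + 2)) with (n + 1)%nat by lia.
    + replace (n + 1)%nat with (S n) by lia. rewrite plus_INR, S_INR. simpl. ring.
  - unfold ta. rewrite Ha0, Cmod_0. ring.
  - intros [|[|k]] Hk; unfold tb; [simpl; ring | rewrite Hb1, Cmod_0; ring | lia].
Qed.

Lemma Series_majorant_lt_1 (a b : nat -> C) (r : R) (m : nat) :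
  a 0%nat = 0 -> b 1%nat = 0 -> a m <> 0 -> 0 < r ->
  (forall rho, 0 <= rho <= r -> ex_series (majorant a b rho)) ->
  Series (fun n => INR (n + 2) * Cmod (b (n + 2)%nat) * r ^ (n + 1))
    + Series (fun n => INR (n + 2) * Cmod (a (n + 1)%nat) * r ^ (n + 1)) <= 1 ->
  forall rho, 0 <= rho < r -> Series (majorant a b rho) < 1.
Proof.
  intros Ha0 Hb1 Ham Hr Hex Hsum rho Hrho.
  assert (Hm0 : m <> 0%nat) by (intros ->; contradiction).
  apply (Rlt_le_trans _ (Series (majorant a b r))).
  - apply (Series_lt _ _ m); [apply Hex; lra .. | intro n; apply majorant_le; lra |].
    now apply majorant_lt.
  - rewrite Series_majorant_shift by (auto; try lra; apply Hex; lra). exact Hsum.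
Qed.

Lemma Wirtinger_terms_le_majorant (a b : nat -> C) (z : C) (n : nat) :
  Cmod (Cconj z * pseries_deriv_term a z n + pseries_deriv_term b z n)%C + Cmod (z ^ n * a n)%C
    <= majorant a b (Cmod z) n.
Proof.
  eapply Rle_trans; [apply Rplus_le_compat_r, Cmod_triangle|].
  rewrite Cmod_mult, Cmod_conj, (Cmod_pseries_deriv_term b), Cmod_mult, Cmod_pow.
  pose proof (Cmod_pseries_deriv_term_le a z (Cmod z) n (Rle_refl _)).
  unfold majorant. lra.
Qed.

Lemma difference_terms_le_majorant (a b : nat -> C) (z w : C) (rho : R) (n : nat) :
  Cmod z <= rho -> Cmod w <= rho ->
  Cmod ((Cconj z * (z ^ n * a n) - Cconj w * (w ^ n * a n)) + (z ^ n * b n - w ^ n * b n))%C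
    <= Cmod (z - w)%C * majorant a b rho n.
Proof.
  intros Hz Hw.
  replace ((Cconj z * (z ^ n * a n) - Cconj w * (w ^ n * a n)) + (z ^ n * b n - w ^ n * b n))%C
    with (a n * (Cconj z * (z ^ n - w ^ n) + Cconj (z - w) * w ^ n) + b n * (z ^ n - w ^ n))%C
    by (rewrite Cminus_conj; ring).
  pose proof (Cmod_Cpow_sub_le z w rho n Hz Hw).
  pose proof (Cmod_triangle (Cconj z * (z ^ n - w ^ n)) (Cconj (z - w) * w ^ n)).
  eapply Rle_trans; [apply Cmod_triangle|].
  rewrite !Cmod_mult in *. rewrite !Cmod_conj, Cmod_pow in *.
  pose proof (Cmod_ge_0 z). pose proof (Cmod_ge_0 w). pose proof (Cmod_ge_0 (z ^ n - w ^ n)%C).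
  pose proof (Cmod_ge_0 (z - w)%C). pose proof (Cmod_ge_0 (a n)). pose proof (Cmod_ge_0 (b n)).
  set (D := Cmod (z ^ n - w ^ n)%C) in *. set (d := Cmod (z - w)%C) in *.
  assert (Hn : INR n * (rho * rho ^ pred n) = INR n * rho ^ n) by (destruct n; simpl; ring).
  assert (Hwn : Cmod w ^ n <= rho ^ n) by (apply pow_incr; lra).
  assert (HX : Cmod z * D + d * Cmod w ^ n <= (INR n + 1) * rho ^ n * d).
  { assert (Cmod z * D <= rho * (INR n * rho ^ pred n * d)) by (apply Rmult_le_compat; lra).
    assert (d * Cmod w ^ n <= d * rho ^ n) by (apply Rmult_le_compat_l; lra). nra. }
  unfold majorant.
  assert (Cmod (a n) * Cmod (Cconj z * (z ^ n - w ^ n) + Cconj (z - w) * w ^ n)%C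
    <= Cmod (a n) * ((INR n + 1) * rho ^ n * d)) by (apply Rmult_le_compat_l; lra).
  assert (Cmod (b n) * D <= Cmod (b n) * (INR n * rho ^ pred n * d))
    by (apply Rmult_le_compat_l; lra).
  nra.
Qed.

Lemma starlike_terms_le_majorant (a b : nat -> C) (z : C) (n : nat) :
  a 0%nat = 0 -> b 0%nat = 0 ->
  Cmod (Cconj z * (z * pseries_deriv_term a z n - 2 * (z ^ n * a n))
        + (z * pseries_deriv_term b z n - z ^ n * b n))%C
  + Cmod (Cconj z * (z ^ n * a n) + z ^ n * b n)%C
  <= Cmod z * majorant a b (Cmod z) n.
Proof.
  intros Ha0 Hb0. pose proof (Cmod_ge_0 z) as Hz0.
  unfold pseries_deriv_term, majorant. destruct n as [|k].
  - rewrite Ha0, Hb0, Cmod_0.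
    match goal with |- Cmod ?X + Cmod ?Y <= _ =>
      replace X with (RtoC 0) by ring; replace Y with (RtoC 0) by ring end.
    rewrite Cmod_0. lra.
  - replace (Cconj z * (z * (INR (S k) * a (S k) * z ^ pred (S k)) - 2 * (z ^ S k * a (S k)))
        + (z * (INR (S k) * b (S k) * z ^ pred (S k)) - z ^ S k * b (S k)))%C
      with (RtoC (INR k - 1) * a (S k) * (Cconj z * z ^ S k) + RtoC (INR k) * b (S k) * z ^ S k)%C
      by (rewrite S_INR, RtoC_minus, RtoC_plus; cbn [Cpow pred]; ring).
    pose proof (Cmod_triangle (RtoC (INR k - 1) * a (S k) * (Cconj z * z ^ S k))
                              (RtoC (INR k) * b (S k) * z ^ S k)).
    pose proof (Cmod_triangle (Cconj z * (z ^ S k * a (S k))) (z ^ S k * b (S k))).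
    rewrite !Cmod_mult, !Cmod_R, Cmod_conj, !Cmod_pow in *.
    rewrite (Rabs_pos_eq (INR k)) in * by apply pos_INR.
    assert (Hk : Rabs (INR k - 1) <= INR k + 1) by (apply Rabs_le; pose proof (pos_INR k); lra).
    set (rho := Cmod z) in *.
    pose proof (Cmod_ge_0 (a (S k))). pose proof (pow_le rho k Hz0).
    change (rho ^ S k) with (rho * rho ^ k) in *. simpl pred. rewrite S_INR.
    assert (HA : Rabs (INR k - 1) * (Cmod (a (S k)) * (rho * (rho * rho ^ k)))
      <= (INR k + 1) * (Cmod (a (S k)) * (rho * (rho * rho ^ k)))).
    { apply Rmult_le_compat_r; [|exact Hk]. apply Rmult_le_pos; [lra|]. nra. }
    nra.
Qed.

(** * The harmonic map F = z̄ G + H *)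

Section HarmonicMap.

Variables (a b : nat -> C) (G H : C -> C).
Hypothesis HG : forall z, Cmod z < 1 -> is_Cseries (fun n => (z ^ n * a n)%C) (G z).
Hypothesis HH : forall z, Cmod z < 1 -> is_Cseries (fun n => (z ^ n * b n)%C) (H z - z)%C.

Let F (z : C) : C := (Cconj z * G z + H z)%C.

Lemma harmonic_Wirtinger (z : C) : Cmod z < 1 ->
  exists dG dH, is_Cseries (pseries_deriv_term a z) dG /\ is_Cseries (pseries_deriv_term b z) dH /\
    Fz F z = (1 + (Cconj z * dG + dH))%C /\ Fzb F z = G z.
Proof.
  intros Hz.
  destruct (pseries_first_order a G HG z Hz) as (dG & HdG & K1 & d1 & HK1 & Hd1 & HG1).
  destruct (pseries_first_order b (fun w => H w - w)%C HH z Hz)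
    as (dH & HdH & K2 & d2 & HK2 & Hd2 & HH1).
  exists dG, dH. do 2 (split; [assumption|]).
  apply (Wirtinger_of_first_order F z _ _ (Cmod z * K1 + K1 + Cmod dG + K2) (Rmin 1 (Rmin d1 d2))).
  { apply Rmin_pos; [lra | now apply Rmin_pos]. }
  intros h Hh.
  pose proof (Rmin_l 1 (Rmin d1 d2)). pose proof (Rmin_r 1 (Rmin d1 d2)).
  pose proof (Rmin_l d1 d2). pose proof (Rmin_r d1 d2).
  specialize (HG1 h ltac:(lra)). specialize (HH1 h ltac:(lra)).
  set (EG := (G (z + h) - G z - h * dG)%C) in *.
  set (EH := (H (z + h) - (z + h) - (H z - z) - h * dH)%C) in *.
  replace (F (z + h) - F z - (h * (1 + (Cconj z * dG + dH)) + Cconj h * G z))%C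
    with (Cconj z * EG + Cconj h * (EG + h * dG) + EH)%C
    by (unfold F, EG, EH; rewrite Cplus_conj; ring).
  pose proof (Cmod_triangle (Cconj z * EG + Cconj h * (EG + h * dG)) EH).
  pose proof (Cmod_triangle (Cconj z * EG) (Cconj h * (EG + h * dG))).
  pose proof (Cmod_triangle EG (h * dG)).
  rewrite !Cmod_mult, !Cmod_conj in *.
  pose proof (Cmod_ge_0 z). pose proof (Cmod_ge_0 h).
  assert (B1 : Cmod z * Cmod EG <= Cmod z * K1 * Cmod h ^ 2)
    by (rewrite Rmult_assoc; apply Rmult_le_compat_l; lra).
  assert (B2 : Cmod h * Cmod (EG + h * dG)%C <= K1 * Cmod h ^ 2 + Cmod dG * Cmod h ^ 2).
  { apply (Rle_trans _ (Cmod h * (K1 * Cmod h ^ 2 + Cmod h * Cmod dG)));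
      [apply Rmult_le_compat_l; lra|].
    assert (0 <= K1 * Cmod h ^ 2) by (apply Rmult_le_pos; [lra | apply pow2_ge_0]). nra. }
  lra.
Qed.

Lemma ex_series_majorant (rho : R) : 0 <= rho < 1 -> ex_series (majorant a b rho).
Proof.
  intros Hrho. set (y := (rho + 1) / 2).
  assert (Hy : 0 < y < 1 /\ rho <= y) by (unfold y; lra).
  assert (Wa := ex_series_sq_weighted_unit_disk a G HG y ltac:(lra)).
  assert (Wb := ex_series_sq_weighted_unit_disk b _ HH y ltac:(lra)).
  apply (ex_series_le (V:=R_CompleteNormedModule)) with
    (fun n => / y * ((INR n + 1) ^ 2 * Cmod (b n) * y ^ n) + (INR n + 1) ^ 2 * Cmod (a n) * y ^ n).
  - intro n. change (Rabs (majorant a b rho n) <= / y * ((INR n + 1) ^ 2 * Cmod (b n) * y ^ n)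
      + (INR n + 1) ^ 2 * Cmod (a n) * y ^ n).
    rewrite Rabs_pos_eq by (apply majorant_nonneg; lra). unfold majorant.
    pose proof (pos_INR n). pose proof (Cmod_ge_0 (a n)). pose proof (Cmod_ge_0 (b n)).
    assert (Hn : INR n + 1 <= (INR n + 1) ^ 2) by nra.
    assert (Hpred : y * rho ^ pred n <= y ^ n).
    { apply (Rle_trans _ (y * y ^ pred n)); [|apply pow_pred_le; lra].
      apply Rmult_le_compat_l; [lra | apply pow_incr; lra]. }
    assert (Hpow : rho ^ n <= y ^ n) by (apply pow_incr; lra).
    pose proof (pow_le rho n ltac:(lra)). pose proof (pow_le rho (pred n) ltac:(lra)).
    apply Rplus_le_compat.
    + apply (Rmult_le_reg_l y); [lra|].
      rewrite <- (Rmult_assoc y (/ y)), Rinv_r, Rmult_1_l by lra.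
      replace (y * (INR n * Cmod (b n) * rho ^ pred n))
        with (INR n * Cmod (b n) * (y * rho ^ pred n)) by ring.
      apply Rmult_le_compat; [nra | nra | nra | exact Hpred].
    + apply Rmult_le_compat; [nra | lra | nra | exact Hpow].
  - apply (ex_series_plus (V:=R_NormedModule)); [|exact Wa].
    now apply (ex_series_scal_l (V:=R_NormedModule)).
Qed.

Lemma harmonic_at_0 : b 0%nat = 0 -> F 0 = 0.
Proof.
  intros Hb0. unfold F.
  assert (HH0 : (H 0 - 0)%C = b 0%nat) by (apply pseries_value_at_0, HH; rewrite Cmod_0; lra).
  rewrite Hb0 in HH0. replace (H 0) with (H 0 - 0)%C by ring. rewrite HH0.
  apply injective_projections; simpl; ring.
Qed.

Variable r : R.
Hypothesis Hr : 0 < r < 1.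
Hypothesis Hmaj : forall rho, 0 <= rho < r -> Series (majorant a b rho) < 1.

Lemma harmonic_sense_preserving : sense_preserving_in F r.
Proof.
  intros z Hz. pose proof (Cmod_ge_0 z). unfold Jac.
  destruct (harmonic_Wirtinger z ltac:(lra)) as (dG & dH & HdG & HdH & -> & ->).
  assert (Hbound : Cmod (Cconj z * dG + dH)%C + Cmod (G z) < 1).
  { eapply Rle_lt_trans; [|apply (Hmaj (Cmod z)); lra].
    apply (Cmod_series_le2 _ _ _ _ _ _
      (is_Cseries_plus _ _ _ _ (is_Cseries_scal (Cconj z) _ _ HdG) HdH) (HG z ltac:(lra))
      (Series_correct _ (ex_series_majorant (Cmod z) ltac:(lra)))).
    apply Wirtinger_terms_le_majorant. }
  pose proof (Cmod_rev_triangle 1 (Cconj z * dG + dH)%C) as Hrev. rewrite Cmod_1 in Hrev.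
  pose proof (Cmod_ge_0 (G z)).
  nra.
Qed.

Lemma harmonic_univalent : univalent_in F r.
Proof.
  intros z w Hz Hw Heq.
  set (rho := Rmax (Cmod z) (Cmod w)).
  assert (Hzr : Cmod z <= rho) by apply Rmax_l. assert (Hwr : Cmod w <= rho) by apply Rmax_r.
  assert (Hrho : 0 <= rho < r) by (pose proof (Cmod_ge_0 z); split; [lra | now apply Rmax_lub_lt]).
  set (S := ((Cconj z * G z - Cconj w * G w) + ((H z - z) - (H w - w)))%C).
  assert (HS : Cmod S <= Cmod (z - w)%C * Series (majorant a b rho)).
  { rewrite <- Series_scal_l.
    apply (Cmod_series_le _ _ _ _
      (is_Cseries_plus _ _ _ _
        (is_Cseries_minus _ _ _ _ (is_Cseries_scal _ _ _ (HG z ltac:(lra)))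
                                  (is_Cseries_scal _ _ _ (HG w ltac:(lra))))
        (is_Cseries_minus _ _ _ _ (HH z ltac:(lra)) (HH w ltac:(lra))))
      (Series_correct _ (ex_series_scal_l _ _ (ex_series_majorant rho ltac:(lra))))).
    intro n. now apply difference_terms_le_majorant. }
  replace S with (- (z - w) + (F z - F w))%C in HS by (unfold S, F; ring).
  rewrite Heq in HS. replace (- (z - w) + (F w - F w))%C with (- (z - w))%C in HS by ring.
  rewrite Cmod_opp in HS.
  pose proof (Hmaj rho Hrho). pose proof (Cmod_ge_0 (z - w)%C).
  apply Ceq_minus, Cmod_eq_0. nra.
Qed.

Lemma harmonic_starlike : a 0%nat = 0 -> b 0%nat = 0 ->
  forall s : R, 0 < s < r -> forall z : C, Cmod z = s ->
    0 < Re (Cdiv (Cminus (Cmult z (Fz F z)) (Cmult (Cconj z) (Fzb F z))) (F z)).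
Proof.
  intros Ha0 Hb0 s Hs z Hz.
  destruct (harmonic_Wirtinger z ltac:(lra)) as (dG & dH & HdG & HdH & -> & ->).
  apply Re_Cdiv_pos.
  set (Y1 := (Cconj z * (z * dG - 2 * G z) + (z * dH - (H z - z)))%C).
  set (Y2 := (Cconj z * G z + (H z - z))%C).
  replace (z * (1 + (Cconj z * dG + dH)) - Cconj z * G z - F z)%C with Y1 by (unfold Y1, F; ring).
  replace (F z) with (z + Y2)%C by (unfold Y2, F; ring).
  assert (HY : Cmod Y1 + Cmod Y2 <= Cmod z * Series (majorant a b (Cmod z))).
  { rewrite <- Series_scal_l.
    apply (Cmod_series_le2 _ _ _ _ _ _
      (is_Cseries_plus _ _ _ _
        (is_Cseries_scal _ _ _ (is_Cseries_minus _ _ _ _ (is_Cseries_scal z _ _ HdG)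
                                                         (is_Cseries_scal 2 _ _ (HG z ltac:(lra)))))
        (is_Cseries_minus _ _ _ _ (is_Cseries_scal z _ _ HdH) (HH z ltac:(lra))))
      (is_Cseries_plus _ _ _ _ (is_Cseries_scal _ _ _ (HG z ltac:(lra))) (HH z ltac:(lra)))
      (Series_correct _ (ex_series_scal_l _ _ (ex_series_majorant (Cmod z) ltac:(lra))))).
    intro n. now apply starlike_terms_le_majorant. }
  pose proof (Hmaj (Cmod z) ltac:(lra)). pose proof (Cmod_rev_triangle z Y2).
  nra.
Qed.

Lemma harmonic_fully_starlike : a 0%nat = 0 -> b 0%nat = 0 -> fully_starlike_in F r.
Proof.
  intros Ha0 Hb0.
  split; [exact harmonic_sense_preserving|]. split; [now apply harmonic_at_0|].
  split; [|exact (harmonic_starlike Ha0 Hb0)].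
  intros z Hz Hzero.
  assert (z = 0) as ->.
  { apply harmonic_univalent; [lra | rewrite Cmod_0; lra | now rewrite Hzero, harmonic_at_0]. }
  rewrite Cmod_0 in Hz. lra.
Qed.

End HarmonicMap.

Theorem lemma3p4 (a b : nat -> C) (G H : C -> C) (r : R) :
  (* G(z) = sum_{n>=1} a_n z^n, analytic in the unit disk, not identically 0 *)
  a 0%nat = RtoC 0 ->
  (forall z : C, Cmod z < 1 -> is_pseries (a : nat -> C_NormedModule) (z : C_AbsRing) (G z)) ->
  (exists n : nat, a n <> RtoC 0) ->
  (* H(z) = z + sum_{n>=2} b_n z^n, analytic in the unit disk *)
  b 0%nat = RtoC 0 -> b 1%nat = RtoC 1 ->
  (forall z : C, Cmod z < 1 -> is_pseries (b : nat -> C_NormedModule) (z : C_AbsRing) (H z)) ->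
  0 < r < 1 ->
  Series (fun n => INR (n + 2) * Cmod (b (n + 2)%nat) * r ^ (n + 1))
    + Series (fun n => INR (n + 2) * Cmod (a (n + 1)%nat) * r ^ (n + 1)) <= 1 ->
  let F := fun z : C => Cplus (Cmult (Cconj z) (G z)) (H z) in
  sense_preserving_in F r /\ univalent_in F r /\ fully_starlike_in F r.
Proof.
  intros Ha0 HGp [m Ham] Hb0 Hb1 HHp Hr Hsum F.
  assert (HG : forall z, Cmod z < 1 -> is_Cseries (fun n => (z ^ n * a n)%C) (G z)) by exact HGp.
  set (b' := drop_coef1 b).
  assert (HH : forall z, Cmod z < 1 -> is_Cseries (fun n => (z ^ n * b' n)%C) (H z - z)%C)
    by (intros z Hz; exact (is_Cseries_drop_coef1 b z (H z) Hb1 (HHp z Hz))).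
  assert (Hmaj : forall rho, 0 <= rho < r -> Series (majorant a b' rho) < 1).
  { apply (Series_majorant_lt_1 a b' r m Ha0 eq_refl Ham); [lra | |].
    - intros rho Hrho. apply (ex_series_majorant a b' G H HG HH). lra.
    - erewrite Series_ext; [exact Hsum|].
      intro n. unfold b', drop_coef1. now replace (n + 2)%nat with (S (S n)) by lia. }
  split; [|split].
  - exact (harmonic_sense_preserving a b' G H HG HH r Hr Hmaj).
  - exact (harmonic_univalent a b' G H HG HH r Hr Hmaj).
  - exact (harmonic_fully_starlike a b' G H HG HH r Hr Hmaj Ha0 Hb0).
Qed.
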